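(* Let $k, r, a, b, m, n$ be integers satisfying $$k\geq 1,\quad 0\leq a\leq m,\quad \max\{0,\tfrac{a}{k}-r\}\leq b\leq n,\quad n\geq \tfrac{m}{k}-r.$$ Let $L_{\frac1k,r}(a,b;m,n)$ be the set of lattice paths from $(a,b)$ to $(m,n)$ with unit steps $(1,0)$ and $(0,1)$ that stay weakly above the line $y=\frac{x}{k}-r$. Then $$|L_{\frac1k,r}(a,b;m,n)|=\sum_{i=0}^{\lfloor\frac{k(n+r)-m}{k+1}\rfloor}(-1)^i\,\frac{k(b+r)-a+1}{k(n+r-i)-a+1}\binom{(k+1)(n-i)-a-b+kr}{n-b-i}\binom{k(n+r-i)-m}{i}.$$
   Context: A path stays weakly above the line $y=\frac{x}{k}-r$ if every lattice point $(x,y)$ on it satisfies $y\geq \frac{x}{k}-r$. $\lfloor x\rfloor$ is the floor function. Binomial coefficients $\binom{N}{j}$ with $N\ge0$ equal $0$ when $j<0$ or $j>N$. *)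

From HB Require Import structures.
From mathcomp Require Import all_boot all_order all_algebra.
Set Implicit Arguments. Unset Strict Implicit. Unset Printing Implicit Defensive.
Import Order.TTheory GRing.Theory Num.Theory.
Local Open Scope ring_scope.

Definition point := (int * int)%type.

Definition step (p : point) (s : bool) : point :=
  if s then (p.1 + 1, p.2) else (p.1, p.2 + 1).

Definition path_points (p0 : point) (s : seq bool) : seq point :=
  p0 :: scanl step p0 s.

Definition path_end (p0 : point) (s : seq bool) : point := foldl step p0 s.

Definition weakly_above (k r : int) (p : point) : bool :=
  (p.1%:~R / k%:~R - r%:~R <= (p.2%:~R : rat)).

(* Any such path has exactly
   (m-a)+(n-b) steps, so paths are encoded as step tuples of that length. *)
Definition path_len (a b m n : int) : nat := absz ((m - a) + (n - b)).

Definition Lpaths (k r a b m n : int) : {set (path_len a b m n).-tuple bool} :=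
  [set t : (path_len a b m n).-tuple bool |
     (path_end (a, b) t == (m, n)) &&
     all (weakly_above k r) (path_points (a, b) t)].

(* Binomial coefficient with integer arguments: 'C(N, j) for N >= 0, j >= 0,
   and 0 when j < 0 (or N < 0, which never occurs in the statement). *)
Definition zbinom (N j : int) : int :=
  if (0 <= N) && (0 <= j) then ('C(absz N, absz j))%:Z else 0.

(* Let F(p, e) be the number of admissible paths to (m, n) from (m - p, n - e), and let
   X = k(n + r) - m >= 0 be the slack of the endpoint.  F satisfies Pascal's rule
   F(p, e) = F(p - 1, e) + F(p, e - 1) at points above the line, with F(p, 0) = 1 and F = 0 on
   the column x = m + 1 and just below the line.  With the ballot numbers
   B(E, N) = C(E + N, N) - k C(E + N, N - 1) = (E - kN + 1)/(E + 1) C(E + N, N), the alternating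
   sum W(p, e) = sum_i (-1)^i B(X - ki + p, e - i) C(X - ki, i) obeys the same rule termwise,
   vanishes just below the line because B(kN - 1, N) = 0, and equals 1 on the column x = m by a
   second Pascal recurrence in X.  Hence F = W, and the terms with (k + 1) i > X vanish. *)

From HB Require Import structures.
From mathcomp Require Import all_boot all_order all_algebra.
From mathcomp Require Import zify ring.
Import Order.TTheory GRing.Theory Num.Theory.
Local Open Scope ring_scope.

Lemma subzS1 (n : nat) : n.+1%:Z - 1 = n.
Proof. by rewrite -addn1 PoszD addrK. Qed.

Lemma zbinom_negr N j : j < 0 -> zbinom N j = 0.
Proof. by rewrite /zbinom => j_lt0; case: ifP => // /andP[_ j_ge0]; lia. Qed.

Lemma zbinom_negl N j : N < 0 -> zbinom N j = 0.
Proof. by rewrite /zbinom => N_lt0; case: ifP => // /andP[N_ge0 _]; lia. Qed.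

Lemma zbinom_small N j : N < j -> zbinom N j = 0.
Proof.
rewrite /zbinom => ltNj; case: ifP => // /andP[N_ge0 j_ge0].
by rewrite bin_small //; lia.
Qed.

Lemma zbinom0r N : 0 <= N -> zbinom N 0 = 1.
Proof. by rewrite /zbinom => ->; rewrite bin0. Qed.

Lemma zbinom_neq0 N j : zbinom N j != 0 -> 0 <= j <= N.
Proof.
move=> nz; apply/andP; split; rewrite leNgt; apply: contra nz => lt.
  by rewrite zbinom_negr.
by rewrite zbinom_small.
Qed.

Lemma zbinomS N j : (N != 0) || (j != 0) ->
  zbinom N j = zbinom (N - 1) j + zbinom (N - 1) (j - 1).
Proof.
have [N_lt0 _|] := ltP N 0; first by rewrite !zbinom_negl //; lia.
have [j_lt0 _ _|] := ltP j 0; first by rewrite !zbinom_negr //; lia.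
case: N j => // [[|M]] [] // [|j] _ _ //=.
  by rewrite subzS1 (@zbinom_negr _ (0 - 1)) // /zbinom /= !bin0.
by rewrite !subzS1 /zbinom /= binS PoszD.
Qed.

Definition ballot (k E N : int) : int :=
  zbinom (E + N) N - k * zbinom (E + N) (N - 1).

Lemma ballot_negr k E N : N < 0 -> ballot k E N = 0.
Proof. by move=> N_lt0; rewrite /ballot !zbinom_negr ?mulr0 ?subr0 //; lia. Qed.

(* The two excluded points are where Pascal's rule fails for one of the binomials, at C(0, 0). *)
Lemma ballot_pascal k E N : (E != 0) || (N != 0) -> (E != -1) || (N != 1) ->
  ballot k E N = ballot k (E - 1) N + ballot k E (N - 1).
Proof.
move=> EN_neq00 EN_neq_m11; rewrite /ballot.
rewrite (zbinomS (E + N) N) ?(zbinomS (E + N) (N - 1)); try by apply/orP; lia.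
have -> : E - 1 + N = E + N - 1 by ring.
have -> : E + (N - 1) = E + N - 1 by ring.
ring.
Qed.

Lemma ballot_on_line k N : 0 <= k -> ballot k (k * N - 1) N = 0.
Proof.
case: k => // k _; have [/ballot_negr//|] := ltP N 0.
case: N => // [[_|j _]]; first by rewrite /ballot !zbinom_negl ?subr0 //; lia.
rewrite /ballot; have -> : Posz k * j.+1%:Z - 1 + j.+1%:Z = (k * j.+1 + j)%N by lia.
rewrite subzS1 /zbinom /= -PoszM; apply/eqP; rewrite subr_eq0 eqz_nat.
rewrite -(eqn_pmul2l (ltn0Sn j)) mul_bin_left.
by rewrite addnK mulnA [(j.+1 * k)%N]mulnC eqxx.
Qed.

Lemma ballot_closed_form k E N : 0 <= E ->
  (E + 1) * ballot k E N = (E - k * N + 1) * zbinom (E + N) N.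
Proof.
move=> E_ge0.
suff lower : (E + 1) * zbinom (E + N) (N - 1) = N * zbinom (E + N) N.
  by rewrite /ballot mulrBr mulrCA lower; ring.
have [N_lt0|] := ltP N 0; first by rewrite !zbinom_negr ?mulr0 //; lia.
case: N => // [[|j _]]; first by rewrite zbinom_negr ?mulr0 ?mul0r.
case: E E_ge0 => // e _.
rewrite subzS1 -PoszD /zbinom /= -!PoszM mul_bin_left addn1.
by have -> : (e + j.+1 - j = e.+1)%N by lia.
Qed.

Lemma ballot_ratio (R : numFieldType) k E N : 0 <= E ->
  (ballot k E N)%:~R = (E - k * N + 1)%:~R / (E + 1)%:~R * (zbinom (E + N) N)%:~R :> R.
Proof.
move=> E_ge0; have E1_neq0 : (E + 1)%:~R != 0 :> R by rewrite intr_eq0; lia.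
apply: (mulfI E1_neq0); rewrite -intrM ballot_closed_form // intrM.
by rewrite mulrA [_ * (_ / _)]mulrC divfK.
Qed.

Section AlternatingSum.

Variable k : int.

Definition alt_term (p e X : int) (i : nat) : int :=
  (-1) ^+ i * ballot k (X - k * i%:Z + p) (e - i%:Z) * zbinom (X - k * i%:Z) i%:Z.

(* The bound S only truncates the sum; every S > e gives the same value. *)
Definition alt_sum (S : nat) (p e X : int) : int :=
  \sum_(0 <= i < S) alt_term p e X i.

Lemma alt_sum_pascal S (p e X : int) : 0 <= p -> (p != 0) || (e != 0) ->
  alt_sum S p e X = alt_sum S (p - 1) e X + alt_sum S p (e - 1) X.
Proof.
move=> p_ge0 pe_neq00; rewrite /alt_sum -big_split; apply: eq_bigr => i _ /=.
rewrite /alt_term; have [->|/zbinom_neq0 i_range] := eqVneq (zbinom (X - k * i%:Z) i%:Z) 0.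
  by rewrite !mulr0 addr0.
rewrite (ballot_pascal k); try by apply/orP; lia.
have -> : X - k * i%:Z + (p - 1) = X - k * i%:Z + p - 1 by ring.
have -> : e - 1 - i%:Z = e - i%:Z - 1 by ring.
ring.
Qed.

Lemma alt_sum_eneg S (p e X : int) : e < 0 -> alt_sum S p e X = 0.
Proof.
move=> e_lt0; rewrite /alt_sum big1 // => i _.
by rewrite /alt_term ballot_negr ?mulr0 ?mul0r //; lia.
Qed.

Lemma alt_sum_e0 S (p X : int) : (0 < S)%N -> 0 <= X -> 0 <= p -> alt_sum S p 0 X = 1.
Proof.
case: S => // S _ X_ge0 p_ge0; rewrite /alt_sum big_nat_recl // big1 ?addr0.
  rewrite /alt_term /ballot (@zbinom_negr _ (0 - 1)) // !mulr0 !subr0 expr0 mul1r.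
  by rewrite !zbinom0r ?mulr1 //; lia.
by move=> i _; rewrite /alt_term ballot_negr ?mulr0 ?mul0r //; lia.
Qed.

Lemma alt_sum_on_line S (p e X : int) : 0 <= k -> X + p = k * e - 1 -> alt_sum S p e X = 0.
Proof.
move=> k_ge0 on_line; rewrite /alt_sum big1 // => i _; rewrite /alt_term.
have -> : X - k * i%:Z + p = k * (e - i%:Z) - 1 by rewrite mulrBr; lia.
by rewrite ballot_on_line // mulr0 mul0r.
Qed.

Lemma alt_sum_pascalX S (e X : int) : X != 0 ->
  alt_sum S.+1 (-1) e X = alt_sum S.+1 0 e (X - 1) - alt_sum S 0 (e - 1) (X - 1 - k).
Proof.
move=> X_neq0.
have termE i : alt_term (-1) e X i = alt_term 0 e (X - 1) i +
    (-1) ^+ i * ballot k (X - k * i%:Z - 1) (e - i%:Z) * zbinom (X - k * i%:Z - 1) (i%:Z - 1).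
  rewrite /alt_term (zbinomS (X - k * i%:Z)); last by apply/orP; lia.
  have -> : X - 1 - k * i%:Z = X - k * i%:Z - 1 by ring.
  rewrite addr0; ring.
rewrite /alt_sum (eq_bigr _ (fun i _ => termE i)) big_split /=; congr (_ + _).
rewrite big_nat_recl // (@zbinom_negr _ (0 - 1)) // mulr0 add0r -sumrN.
apply: eq_bigr => i _; rewrite /alt_term.
have -> : X - k * i.+1%:Z - 1 = X - 1 - k - k * i%:Z + 0 by rewrite -addn1 PoszD; ring.
have -> : e - i.+1%:Z = e - 1 - i%:Z by rewrite -addn1 PoszD; ring.
by rewrite subzS1 addr0 exprS; ring.
Qed.

Lemma alt_sum_trunc S S' (p e X : int) : 0 <= k -> (S' <= S)%N -> X < (k + 1) * S'%:Z ->
  alt_sum S p e X = alt_sum S' p e X.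
Proof.
move=> k_ge0 le_S'S X_lt; rewrite /alt_sum (@big_cat_nat _ _ _ S') // /=.
rewrite [Y in _ + Y]big_nat_cond [Y in _ + Y]big1 ?addr0 // => i /andP[/andP[le_S'i _] _].
rewrite /alt_term zbinom_small ?mulr0 //.
have : (k + 1) * S'%:Z <= (k + 1) * i%:Z by rewrite ler_pM2l; lia.
lia.
Qed.

Lemma alt_term_ratio (R : numFieldType) (p e X : int) (i : nat) : 0 <= p ->
  (alt_term p e X i)%:~R = (-1) ^+ i
    * ((X - k * e + p + 1)%:~R / (X - k * i%:Z + p + 1)%:~R)
    * (zbinom (X - k * i%:Z + p + (e - i%:Z)) (e - i%:Z))%:~R
    * (zbinom (X - k * i%:Z) i%:Z)%:~R :> R.
Proof.
move=> p_ge0; rewrite /alt_term !intrM rmorphXn rmorphN1.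
have [->|/zbinom_neq0 i_range] := eqVneq (zbinom (X - k * i%:Z) i%:Z) 0.
  by rewrite !mulr0.
rewrite ballot_ratio; last by lia.
have -> : X - k * i%:Z + p - k * (e - i%:Z) + 1 = X - k * e + p + 1 by ring.
by rewrite !mulrA.
Qed.

Hypothesis k_ge1 : 1 <= k.

(* On the column x = m the alternating sum is 1: split off the column x = m + 1 by Pascal's
   rule in p, and kill it by induction on the slack X - k e with Pascal's rule in X. *)
Lemma alt_sum_p0 (e : nat) (X : int) S : k * e%:Z <= X -> (e < S)%N -> alt_sum S 0 e X = 1.
Proof.
elim: e X S => [|e IH] X S le_ke_X lt_e_S; first by apply: alt_sum_e0; lia.
have le_ke_kS : k * e%:Z <= k * e.+1%:Z by rewrite ler_pM2l; lia.
have east_split S' (Y : int) : (e.+1 < S')%N -> k * e.+1%:Z <= Y ->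
    alt_sum S' 0 e.+1 Y = alt_sum S' (-1) e.+1 Y + 1.
  move=> lt_eS_S' le_keS_Y; rewrite alt_sum_pascal // sub0r subzS1 IH //; lia.
suff east_zero d S' : (e.+1 < S')%N -> alt_sum S' (-1) e.+1 (k * e.+1%:Z + d%:Z) = 0.
  rewrite east_split //.
  have -> : X = k * e.+1%:Z + (absz (X - k * e.+1%:Z)%R)%:Z by rewrite gez0_abs; lia.
  by rewrite east_zero ?add0r.
elim: d S' => [|d IHd] [|S'] // lt_eS_S'.
  by rewrite alt_sum_on_line //; lia.
rewrite alt_sum_pascalX; last by lia.
have -> : k * e.+1%:Z + d.+1%:Z - 1 = k * e.+1%:Z + d%:Z by lia.
rewrite east_split ?IHd ?add0r ?subzS1; try lia.
rewrite IH ?subrr //; lia.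
Qed.

Lemma alt_sum_pN1 (e : nat) (X : int) S : (0 < e)%N -> k * e%:Z <= X -> (e < S)%N ->
  alt_sum S (-1) e X = 0.
Proof.
case: e => // e _ le_ke_X lt_e_S.
have le_ke_X' : k * e%:Z <= X by rewrite (le_trans _ le_ke_X) // ler_pM2l; lia.
have := alt_sum_pascal S 0 e.+1 X (lexx 0) isT.
rewrite sub0r subzS1 !alt_sum_p0 // 1?ltnW //.
by move=> /(congr1 (fun z => z - 1)); rewrite addrK subrr => <-.
Qed.

End AlternatingSum.

Lemma big_tupleS (R : Type) (idx : R) (op : Monoid.com_law idx) (T : finType) (L : nat)
    (F : L.+1.-tuple T -> R) :
  \big[op/idx]_(t : L.+1.-tuple T) F t =
  \big[op/idx]_(x : T) \big[op/idx]_(t : L.-tuple T) F [tuple of x :: t].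
Proof.
rewrite (reindex (fun xt : T * L.-tuple T => [tuple of xt.1 :: xt.2])) /=.
  by rewrite -(pair_bigA _ (fun (x : T) (t : L.-tuple T) => F [tuple of x :: t])).
exists (fun t : L.+1.-tuple T => (thead t, [tuple of behead t])).
  by move=> [x t] _; congr pair; apply: val_inj.
by move=> t _; rewrite [in RHS](tuple_eta t).
Qed.

Fixpoint npaths (k r : int) (q : point) (L : nat) (p0 : point) : nat :=
  match L with
  | 0 => (p0 == q) && weakly_above k r p0
  | L.+1 => if weakly_above k r p0
            then (npaths k r q L (step p0 true) + npaths k r q L (step p0 false))%N
            else 0%N
  end.

Lemma card_npaths (k r : int) (q p0 : point) (L : nat) :
  #|[set t : L.-tuple bool |
     (path_end p0 t == q) && all (weakly_above k r) (path_points p0 t)]|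
  = npaths k r q L p0.
Proof.
rewrite -sum1dep_card big_mkcond /=; elim: L p0 => [|L IH] p0.
  rewrite (big_pred1 [tuple]) => [|t]; last by symmetry; apply/eqP; apply: tuple0.
  by rewrite /path_end /path_points /= andbT; case: ifP.
rewrite big_tupleS big_bool /= /path_end /path_points /=.
by case: (weakly_above k r p0); rewrite /= -?IH // !big1 // => t _; rewrite andbF.
Qed.

Lemma weakly_aboveE (k r x y : int) : 0 < k -> weakly_above k r (x, y) = (x <= k * (y + r)).
Proof.
move=> k_gt0; rewrite /weakly_above /= lerBlDr ler_pdivrMr ?ltr0z //.
by rewrite -intrD -intrM ler_int mulrC.
Qed.

Lemma npaths_not_above k r q L p0 : ~~ weakly_above k r p0 -> npaths k r q L p0 = 0%N.
Proof. by case: L => [|L] /= /negbTE->; rewrite ?andbF. Qed.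

Lemma npaths_beyond k r (q : point) L (p0 : point) :
  (q.1 < p0.1) || (q.2 < p0.2) -> npaths k r q L p0 = 0%N.
Proof.
case: q => qx qy; elim: L p0 => [|L IH] [x y] /= beyond.
  by case: eqP => // -[ex ey]; move: beyond; rewrite ex ey !ltxx.
by case: ifP => // _; rewrite !IH //=; lia.
Qed.

Section PathCount.

Variables (k r m n : int).
Hypotheses (k_ge1 : 1 <= k) (end_above : m <= k * (n + r)).

Let X := k * (n + r) - m.

(* [p] east and [e] north steps remain to reach (m, n); both sides obey Pascal's rule, and the
   neighbours past the endpoint or below the line contribute 0 to both. *)
Lemma npaths_alt_sum (L p e : nat) S : L = (p + e)%N -> k * e%:Z <= X + p%:Z -> (e < S)%N ->
  (npaths k r (m, n) L (m - p%:Z, n - e%:Z))%:Z = alt_sum k S p e X.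
Proof.
have k_gt0 : 0 < k by lia.
elim: L p e S => [|L IH] p e S def_L start_above lt_e_S.
  case: p e def_L {start_above} lt_e_S => [|//] [|//] _ lt0S.
  by rewrite /= !subr0 eqxx /= weakly_aboveE // alt_sum_e0 //; lia.
have start_aboveE : weakly_above k r (m - p%:Z, n - e%:Z).
  rewrite weakly_aboveE //; lia.
rewrite /= start_aboveE PoszD alt_sum_pascal //; last by apply/orP; lia.
rewrite /step /=; congr (_ + _).
- case: p def_L start_above {start_aboveE} => [|p] def_L start_above.
    rewrite npaths_beyond /=; last by apply/orP; left; lia.
    by rewrite sub0r alt_sum_pN1 //; lia.
  have -> : m - p.+1%:Z + 1 = m - p%:Z by rewrite -subzS1; ring.
  rewrite subzS1; have [next_above|next_below] := leP (k * e%:Z) (X + p%:Z).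
    by apply: IH => //; lia.
  rewrite alt_sum_on_line; try lia.
  by rewrite npaths_not_above // weakly_aboveE //; lia.
- case: e def_L start_above lt_e_S {start_aboveE} => [|e] def_L start_above lt_e_S.
    rewrite npaths_beyond /=; last by apply/orP; right; lia.
    by rewrite alt_sum_eneg.
  have -> : n - e.+1%:Z + 1 = n - e%:Z by rewrite -subzS1; ring.
  rewrite subzS1; apply: IH; [lia | | exact: ltnW].
  have : k * e%:Z <= k * e.+1%:Z by rewrite ler_pM2l; lia.
  lia.
Qed.

End PathCount.

Theorem corollary2p2 (k r a b m n : int) :
  1 <= k ->
  0 <= a -> a <= m ->
  0 <= b -> (a%:~R / k%:~R - r%:~R <= (b%:~R : rat)) -> b <= n ->
  (m%:~R / k%:~R - r%:~R <= (n%:~R : rat)) ->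
  (#|Lpaths k r a b m n|%:R : rat) =
  \sum_(0 <= i < (absz ((k * (n + r) - m) %/ (k + 1))%Z).+1)
     (-1) ^+ i
     * ((k * (b + r) - a + 1)%:~R / (k * (n + r - i%:Z) - a + 1)%:~R)
     * (zbinom ((k + 1) * (n - i%:Z) - a - b + k * r) (n - b - i%:Z))%:~R
     * (zbinom (k * (n + r - i%:Z) - m) i%:Z)%:~R.
Proof.
move=> k_ge1 a_ge0 le_am b_ge0 start_above le_bn end_above.
have k_gt0 : 0 < k by lia.
have {}start_above : a <= k * (b + r) by rewrite -(weakly_aboveE k r a b k_gt0).
have {}end_above : m <= k * (n + r) by rewrite -(weakly_aboveE k r m n k_gt0).
pose p := absz (m - a); pose e := absz (n - b).
have p_def : p%:Z = m - a by rewrite gez0_abs //; lia.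
have e_def : e%:Z = n - b by rewrite gez0_abs //; lia.
have len_def : path_len a b m n = (p + e)%N by apply/eqP; rewrite -eqz_nat /path_len; lia.
have -> : #|Lpaths k r a b m n| = npaths k r (m, n) (p + e) (m - p%:Z, n - e%:Z).
  by rewrite /Lpaths card_npaths len_def p_def e_def !subKr.
have slack : k * e%:Z <= k * (n + r) - m + p%:Z by lia.
have S_gt : k * (n + r) - m < (k + 1) * (absz ((k * (n + r) - m) %/ (k + 1))%Z).+1%:Z.
  have q_ge0 : 0 <= ((k * (n + r) - m) %/ (k + 1))%Z by rewrite divz_ge0; lia.
  by rewrite -addn1 PoszD gez0_abs // [Y in _ < Y]mulrC; apply: ltz_ceil; lia.
set S := (absz ((k * (n + r) - m) %/ (k + 1))%Z).+1 in S_gt *.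
rewrite pmulrn (@npaths_alt_sum k r m n k_ge1 end_above _ p e (maxn e.+1 S)) ?leq_maxl //.
rewrite (@alt_sum_trunc k _ S _ _ _ (ltW k_gt0) (leq_maxr _ _) S_gt).
rewrite /alt_sum rmorph_sum; apply: eq_bigr => i _ /=; rewrite alt_term_ratio // p_def e_def.
by congr (_ * (_%:~R / _%:~R) * (zbinom _ _)%:~R * (zbinom _ _)%:~R); ring.
Qed.
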